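(* Let $(E,C)$ be a separated graph with $E^0$ and $E^1$ countable (finite or countably infinite), and let $S\subseteq C_{fin}$. Then there exists an $(E,C,S)$-algebraic branching system $(\mathfrak{X},\{R_e\}_{e\in E^1},\{D_v\}_{v\in E^0},\{f_e\}_{e\in E^1})$ with $\mathfrak{X}\subseteq\mathbb{R}$ such that, for every non-sink $v\in E^0$: 1. $R_e\cap R_f\neq\emptyset$ for each $e\in X$, $f\in Y$, whenever $X,Y\in C_v$ with $X\neq Y$; 2. for each $X\in C_v\setminus S$, $\bigcup_{e\in X}R_e\subsetneq D_v$; 3. for $X,Y\in C_v\setminus S$ with $X\neq Y$, $\bigcup_{e\in X}R_e\neq\bigcup_{f\in Y}R_f$.
   Context: A separated graph is a pair $(E,C)$ where $E=(E^0,E^1,r,s)$ is a directed graph (vertex set $E^0$, edge set $E^1$, range and source maps $r,s:E^1\to E^0$) and $C=\bigcup_{v\in E^0}C_v$, where for each non-sink $v$ (i.e. $s^{-1}(v)\neq\emptyset$), $C_v$ is a partition of $s^{-1}(v)$ into pairwise disjoint nonempty sets. $C_{fin}$ denotes the set of all finite sets $Y\in C$. Given $(E,C)$ and $S\subseteq C_{fin}$, an $(E,C,S)$-algebraic branching system consists of a set $\mathfrak{X}$, families of subsets $\{R_e\}_{e\in E^1}$, $\{D_v\}_{v\in E^0}$ of $\mathfrak{X}$ and maps $f_e$ such that: (1) $R_e\cap R_d=\emptyset$ for $d,e\in Y$, $d\neq e$, $Y\in C$; (2) $D_u\cap D_v=\emptyset$ for $u\neq v$ in $E^0$; (3) $R_e\subseteq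 D_{s(e)}$ for each $e\in E^1$; (4) $D_v=\bigcup_{e\in Y}R_e$ whenever $Y\in S\cap C_v$, for each non-sink $v$; (5) for each $e\in E^1$, $f_e:D_{r(e)}\to R_e$ is a bijection. *)

From Stdlib Require Import Reals List.
Open Scope R_scope.

Definition countable_type (T : Type) : Prop :=
  exists g : T -> nat, forall x y, g x = g y -> x = y.

Definition finite_set {T : Type} (X : T -> Prop) : Prop :=
  exists l : list T, forall x, X x -> In x l.

Definition non_sink {V E : Type} (s : E -> V) (v : V) : Prop :=
  exists e, s e = v.

(* C (a set of sets of edges) is a separation of the graph with source map s:
   its members are nonempty, each contained in s^{-1}(v) for a single v,
   pairwise disjoint, and they cover E^1.  Then C_v (below) is a partition
   of s^{-1}(v) for each non-sink v. *)
Definition is_separation {V E : Type} (s : E -> V) (C : (E -> Prop) -> Prop) : Prop :=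
  (forall X, C X -> exists e, X e) /\
  (forall X, C X -> forall e1 e2, X e1 -> X e2 -> s e1 = s e2) /\
  (forall X Y, C X -> C Y -> (exists e, X e /\ Y e) -> X = Y) /\
  (forall e, exists X, C X /\ X e).

Definition in_Cv {V E : Type} (s : E -> V) (C : (E -> Prop) -> Prop)
  (v : V) (X : E -> Prop) : Prop :=
  C X /\ (forall e, X e -> s e = v).

Definition bij_on {A B : Type} (f : A -> B) (P : A -> Prop) (Q : B -> Prop) : Prop :=
  (forall x, P x -> Q (f x)) /\
  (forall x y, P x -> P y -> f x = f y -> x = y) /\
  (forall y, Q y -> exists x, P x /\ f x = y).

Definition union_R {E : Type} (Rs : E -> R -> Prop) (X : E -> Prop) : R -> Prop :=
  fun x => exists e, X e /\ Rs e x.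

Definition alg_branching_system {V E : Type} (r s : E -> V)
  (C S : (E -> Prop) -> Prop)
  (Xs : R -> Prop) (Rs : E -> R -> Prop) (D : V -> R -> Prop) (f : E -> R -> R) : Prop :=
  (forall e x, Rs e x -> Xs x) /\
  (forall v x, D v x -> Xs x) /\
  (forall Y d e, C Y -> Y d -> Y e -> d <> e -> forall x, ~ (Rs d x /\ Rs e x)) /\
  (forall u v, u <> v -> forall x, ~ (D u x /\ D v x)) /\
  (forall e x, Rs e x -> D (s e) x) /\
  (forall v Y, non_sink s v -> S Y -> in_Cv s C v Y ->
     forall x, D v x <-> union_R Rs Y x) /\
  (forall e, bij_on (f e) (D (r e)) (Rs e)).

From Stdlib Require Import Reals List.
From Stdlib Require Import Lia Cantor Wf_nat Classical ClassicalEpsilon.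
Open Scope nat_scope.

(* Everything is built in nat and embedded into R by INR.  A point is a Cantor pair
   (code v, w), where w is read as an infinite sequence of coordinates, and D_v is the
   set of all such pairs.  Each class Y of C owns a coordinate [key Y] and a map
   [sel Y : nat -> option E] onto Y which never returns None if Y is in S and returns
   None at 0 otherwise; for e in Y, (code v, w) lies in R_e iff [sel Y] reads e at coordinate
   [key Y] of w.  Different classes read different coordinates, which can be chosen
   independently: this gives property 1, and taking the value 0 gives properties 2
   and 3.  Finally D_{r(e)} and R_e are infinite subsets of nat, hence equinumerous. *)

Definition npair (a b : nat) : nat := Cantor.to_nat (a, b).

Lemma npair_inj a b a' b' : npair a b = npair a' b' -> a = a' /\ b = b'.
Proof.
  unfold npair; intro H. assert (H' := f_equal Cantor.of_nat H).
  rewrite !Cantor.cancel_of_to in H'. now inversion H'.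
Qed.

Lemma le_npair_r a b : b <= npair a b.
Proof. unfold npair. pose proof (Cantor.to_nat_non_decreasing a b). lia. Qed.

Definition ntail (w : nat) : nat := snd (Cantor.of_nat w).
Definition coord (k w : nat) : nat := fst (Cantor.of_nat (Nat.iter k ntail w)).

Fixpoint encode (l : list nat) (t : nat) : nat :=
  match l with nil => t | a :: l' => npair a (encode l' t) end.

Lemma coord_encode l t k : k < length l -> coord k (encode l t) = nth k l 0.
Proof.
  revert k; induction l as [|a l IH]; intros [|k] Hk; simpl in *; try lia.
  - unfold coord, npair; cbn [Nat.iter nat_rect]. now rewrite Cantor.cancel_of_to.
  - unfold coord. rewrite Nat.iter_succ_r.
    unfold ntail at 2, npair. rewrite Cantor.cancel_of_to. apply IH; lia.
Qed.

Lemma le_encode l t : t <= encode l t.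
Proof. induction l as [|a l IH]; simpl; [lia|]. pose proof (le_npair_r a (encode l t)). lia. Qed.

Lemma exists_coords (f : nat -> nat) (M N : nat) :
  exists w, N <= w /\ forall k, k < M -> coord k w = f k.
Proof.
  exists (encode (map f (seq 0 M)) N). split; [apply le_encode|].
  intros k Hk. rewrite coord_encode by (rewrite length_map, length_seq; lia).
  rewrite nth_indep with (d' := f 0) by (rewrite length_map, length_seq; lia).
  now rewrite map_nth, seq_nth by lia.
Qed.

Lemma exists_coord1 k a N : exists w, N <= w /\ coord k w = a.
Proof. destruct (exists_coords (fun _ => a) (S k) N) as [w [Hw Hc]]. eauto. Qed.

Lemma exists_coord2 k1 k2 a1 a2 : k1 <> k2 ->
  exists w, coord k1 w = a1 /\ coord k2 w = a2.
Proof.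
  intro Hk.
  destruct (exists_coords (fun k => if k =? k1 then a1 else a2) (S (k1 + k2)) 0)
    as [w [_ Hc]].
  exists w. rewrite !Hc, Nat.eqb_refl by lia. split; [reflexivity|].
  destruct (Nat.eqb_spec k2 k1); [lia|reflexivity].
Qed.

Definition unbounded (A : nat -> Prop) : Prop := forall N, exists a, N <= a /\ A a.

Section Enumeration.
Variable A : nat -> Prop.
Hypothesis A_unbounded : unbounded A.

Definition least_from (m : nat) : nat :=
  epsilon (inhabits 0) (fun a => (A a /\ m <= a) /\ forall b, A b /\ m <= b -> a <= b).

Lemma least_from_spec m :
  (A (least_from m) /\ m <= least_from m) /\
  forall b, A b /\ m <= b -> least_from m <= b.
Proof.
  unfold least_from. apply (epsilon_spec (inhabits 0)).
  destruct (A_unbounded m) as [a [Hma Ha]].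
  destruct (dec_inh_nat_subset_has_unique_least_element (fun a => A a /\ m <= a)
    (fun n => classic _) (ex_intro _ a (conj Ha Hma))) as [b [[Hb Hleast] _]].
  eauto.
Qed.

Fixpoint enum (n : nat) : nat :=
  match n with 0 => least_from 0 | S n => least_from (S (enum n)) end.

Lemma enum_in n : A (enum n).
Proof. destruct n; apply least_from_spec. Qed.

Lemma enum_lt_succ n : enum n < enum (S n).
Proof. apply least_from_spec. Qed.

Lemma enum_lt n m : n < m -> enum n < enum m.
Proof. induction 1; [apply enum_lt_succ|]. pose proof (enum_lt_succ m). lia. Qed.

Lemma enum_inj n m : enum n = enum m -> n = m.
Proof.
  intro H. destruct (Nat.lt_trichotomy n m) as [Hnm|[Hnm|Hnm]];
    [apply enum_lt in Hnm | | apply enum_lt in Hnm]; lia.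
Qed.

Lemma le_enum n : n <= enum n.
Proof. induction n; [lia|]. pose proof (enum_lt_succ n). lia. Qed.

Lemma enum_onto_below n a : A a -> a < enum n -> exists k, enum k = a.
Proof.
  revert a; induction n as [|n IH]; intros a Ha Hlt.
  - assert (least_from 0 <= a) by (apply least_from_spec; split; [exact Ha | lia]).
    simpl in Hlt. lia.
  - destruct (Nat.lt_trichotomy a (enum n)) as [H|[H|H]]; [now apply IH | eauto |].
    assert (least_from (S (enum n)) <= a) by (apply least_from_spec; split; [exact Ha | lia]).
    simpl in Hlt. lia.
Qed.

Lemma enum_onto a : A a -> exists k, enum k = a.
Proof. intro Ha. apply (enum_onto_below (S a)); [exact Ha|]. pose proof (le_enum (S a)). lia. Qed.

End Enumeration.

Lemma unbounded_bij_on (A B : nat -> Prop) :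
  unbounded A -> unbounded B -> exists phi : nat -> nat, bij_on phi A B.
Proof.
  intros HA HB.
  set (index := fun a => epsilon (inhabits 0) (fun n => enum A n = a)).
  assert (Hindex : forall a, A a -> enum A (index a) = a).
  { intros a Ha. apply (epsilon_spec (inhabits 0) (fun n => enum A n = a)).
    now apply enum_onto. }
  exists (fun a => enum B (index a)). split; [|split].
  - intros a _. now apply enum_in.
  - intros a a' Ha Ha' H. apply enum_inj in H; [|exact HB].
    rewrite <- (Hindex a Ha), <- (Hindex a' Ha'), H. reflexivity.
  - intros b Hb. destruct (enum_onto B HB b Hb) as [k <-].
    exists (enum A k). split; [now apply enum_in|].
    f_equal. apply (enum_inj A HA). apply Hindex, enum_in, HA.
Qed.

Open Scope R_scope.

Definition to_R (A : nat -> Prop) : R -> Prop := fun x => exists m, A m /\ x = INR m.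

Lemma to_R_INR (A : nat -> Prop) m : to_R A (INR m) <-> A m.
Proof.
  split; [|intro; now exists m].
  intros [m' [Hm' Heq]]. apply INR_eq in Heq. now subst.
Qed.

Lemma to_R_sub (A B : nat -> Prop) :
  (forall m, A m -> B m) -> forall x, to_R A x -> to_R B x.
Proof. intros H x [m [Hm ->]]. exists m; auto. Qed.

Lemma to_R_iff (A B : nat -> Prop) :
  (forall m, A m <-> B m) -> forall x, to_R A x <-> to_R B x.
Proof. intros H x; split; apply to_R_sub; apply H. Qed.

Lemma to_R_disjoint (A B : nat -> Prop) :
  (forall m, ~ (A m /\ B m)) -> forall x, ~ (to_R A x /\ to_R B x).
Proof.
  intros H x [[m [Hm ->]] HB]. apply to_R_INR in HB. exact (H m (conj Hm HB)).
Qed.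

Lemma union_R_to_R {E : Type} (Rn : E -> nat -> Prop) (X : E -> Prop) x :
  union_R (fun e => to_R (Rn e)) X x <-> to_R (fun m => exists e, X e /\ Rn e m) x.
Proof.
  split.
  - intros [e [He [m [Hm ->]]]]. exists m; eauto.
  - intros [m [[e [He Hm]] ->]]. exists e. split; [exact He|]. now apply to_R_INR.
Qed.

Definition nat_of_R (x : R) : nat := epsilon (inhabits 0%nat) (fun n => INR n = x).

Lemma nat_of_R_INR n : nat_of_R (INR n) = n.
Proof.
  apply INR_eq. apply (epsilon_spec (inhabits 0%nat) (fun k => INR k = INR n)). eauto.
Qed.

Lemma bij_on_to_R (A B : nat -> Prop) (phi : nat -> nat) : bij_on phi A B ->
  bij_on (fun x => INR (phi (nat_of_R x))) (to_R A) (to_R B).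
Proof.
  intros [Hmaps [Hinj Honto]]. split; [|split].
  - intros x [m [Hm ->]]. rewrite nat_of_R_INR. apply to_R_INR; auto.
  - intros x y [m [Hm ->]] [k [Hk ->]] H. rewrite !nat_of_R_INR in H.
    apply INR_eq in H. f_equal; auto.
  - intros y [m [Hm ->]]. destruct (Honto m Hm) as [x [Hx <-]].
    exists (INR x). split; [now apply to_R_INR | now rewrite nat_of_R_INR].
Qed.

Lemma countable_nat_onto {E : Type} (Y : E -> Prop) : countable_type E -> (exists e, Y e) ->
  exists g : nat -> E, (forall n, Y (g n)) /\ forall e, Y e -> exists n, g n = e.
Proof.
  intros [code code_inj] [e0 He0].
  set (P := fun n e => Y e /\ (code e = n \/ ~ exists d, Y d /\ code d = n)).
  assert (HP : forall n, P n (epsilon (inhabits e0) (P n))).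
  { intro n. apply epsilon_spec. destruct (classic (exists d, Y d /\ code d = n))
      as [[d [Hd Hcode]]|Hnone]; [exists d | exists e0]; unfold P; tauto. }
  exists (fun n => epsilon (inhabits e0) (P n)). split.
  - intro n. apply HP.
  - intros e He. exists (code e). apply code_inj.
    destruct (HP (code e)) as [_ [Hcode|Hnone]]; [exact Hcode|].
    exfalso. apply Hnone. eauto.
Qed.

Record selector {E : Type} (Y : E -> Prop) (total : Prop) (sg : nat -> option E) : Prop := {
  selector_sound : forall n e, sg n = Some e -> Y e;
  selector_onto : forall e, Y e -> exists n, sg n = Some e;
  selector_total : total -> forall n, sg n <> None;
  selector_zero : ~ total -> sg 0%nat = None }.

Lemma selector_exists {E : Type} (Y : E -> Prop) (total : Prop) :
  countable_type E -> (exists e, Y e) -> exists sg, selector Y total sg.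
Proof.
  intros HE HY. destruct (countable_nat_onto Y HE HY) as [g [Hin Honto]].
  destruct (classic total) as [Ht|Ht].
  - exists (fun n => Some (g n)). split; try congruence.
    + intros n e [= <-]. apply Hin.
    + intros e He. destruct (Honto e He) as [n <-]. eauto.
  - exists (fun n => match n with 0%nat => None | S n => Some (g n) end). split; try tauto.
    + intros [|n] e H; [discriminate | injection H as <-; apply Hin].
    + intros e He. destruct (Honto e He) as [n <-]. now exists (S n).
Qed.

Section Construction.

Variables (V E : Type) (r s : E -> V) (C S : (E -> Prop) -> Prop).
Variables (gV : V -> nat) (gE : E -> nat).
Hypothesis gV_inj : forall u v, gV u = gV v -> u = v.
Hypothesis gE_inj : forall d e, gE d = gE e -> d = e.
Hypothesis C_sep : is_separation s C.

Definition class_of (e : E) : E -> Prop :=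
  epsilon (inhabits (fun _ => False)) (fun X => C X /\ X e).

Lemma class_of_spec e : C (class_of e) /\ class_of e e.
Proof.
  apply (epsilon_spec (inhabits (fun _ : E => False)) (fun X => C X /\ X e)).
  apply C_sep.
Qed.

Lemma class_of_eq Y e : C Y -> Y e -> class_of e = Y.
Proof.
  intros HY He. destruct (class_of_spec e) as [HC Hce].
  apply C_sep; eauto.
Qed.

Definition key (Y : E -> Prop) : nat :=
  epsilon (inhabits 0%nat) (fun n => exists e, Y e /\ gE e = n).

Lemma key_spec Y : C Y -> exists e, Y e /\ gE e = key Y.
Proof.
  intro HY. apply (epsilon_spec (inhabits 0%nat) (fun n => exists e, Y e /\ gE e = n)).
  destruct (proj1 C_sep Y HY) as [e He]. eauto.
Qed.

Lemma key_inj X Y : C X -> C Y -> key X = key Y -> X = Y.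
Proof.
  intros HX HY H. destruct (key_spec X HX) as [d [Hd Hkd]], (key_spec Y HY) as [e [He Hke]].
  assert (d = e) by (apply gE_inj; congruence). subst e.
  apply C_sep; eauto.
Qed.

Definition sel (Y : E -> Prop) : nat -> option E :=
  epsilon (inhabits (fun _ => None)) (selector Y (S Y)).

Lemma sel_spec Y : C Y -> selector Y (S Y) (sel Y).
Proof.
  intro HY. unfold sel. apply epsilon_spec, selector_exists; [now exists gE | exact (proj1 C_sep Y HY)].
Qed.

Definition vertex_pts (v : V) (m : nat) : Prop := exists w, m = npair (gV v) w.

Definition edge_pts (e : E) (m : nat) : Prop :=
  exists w, m = npair (gV (s e)) w /\ sel (class_of e) (coord (key (class_of e)) w) = Some e.

Lemma edge_pts_sub e m : edge_pts e m -> vertex_pts (s e) m.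
Proof. intros [w [-> _]]. now exists w. Qed.

Lemma edge_pts_disjoint Y d e m :
  C Y -> Y d -> Y e -> d <> e -> ~ (edge_pts d m /\ edge_pts e m).
Proof.
  intros HY Hd He Hde [[w [-> Hw]] [w' [Heq Hw']]].
  apply npair_inj in Heq as [_ <-].
  rewrite (class_of_eq Y d HY Hd) in Hw. rewrite (class_of_eq Y e HY He) in Hw'.
  congruence.
Qed.

Lemma vertex_pts_disjoint u v m : u <> v -> ~ (vertex_pts u m /\ vertex_pts v m).
Proof.
  intros Huv [[w ->] [w' Heq]]. apply npair_inj in Heq as [Heq _]. auto.
Qed.

Lemma union_edge_pts v Y m : in_Cv s C v Y ->
  (exists e, Y e /\ edge_pts e m) <->
  exists w, m = npair (gV v) w /\ sel Y (coord (key Y) w) <> None.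
Proof.
  intros [HY HYv]. split.
  - intros [e [He [w [-> Hw]]]]. exists w.
    rewrite (class_of_eq Y e HY He), (HYv e He) in *. split; congruence.
  - intros [w [-> Hw]]. destruct (sel Y (coord (key Y) w)) as [e|] eqn:Hsel; [|easy].
    assert (He : Y e) by exact (selector_sound _ _ _ (sel_spec Y HY) _ _ Hsel).
    exists e. split; [exact He|]. exists w.
    rewrite (class_of_eq Y e HY He), (HYv e He). auto.
Qed.

Lemma union_edge_pts_sub v X m : in_Cv s C v X ->
  (exists e, X e /\ edge_pts e m) -> vertex_pts v m.
Proof. intros [_ HXv] [e [He Hm]]. rewrite <- (HXv e He). now apply edge_pts_sub. Qed.

Lemma union_edge_pts_full v Y m : S Y -> in_Cv s C v Y ->
  vertex_pts v m <-> exists e, Y e /\ edge_pts e m.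
Proof.
  intros HSY HYv. rewrite (union_edge_pts v Y m HYv). split.
  - intros [w ->]. exists w. split; [reflexivity|].
    exact (selector_total _ _ _ (sel_spec Y (proj1 HYv)) HSY _).
  - intros [w [-> _]]. now exists w.
Qed.

Lemma vertex_pts_unbounded v : unbounded (vertex_pts v).
Proof. intro N. exists (npair (gV v) N). split; [apply le_npair_r | now exists N]. Qed.

Lemma edge_pts_unbounded e : unbounded (edge_pts e).
Proof.
  intro N. destruct (class_of_spec e) as [HC Hce].
  destruct (selector_onto _ _ _ (sel_spec _ HC) e Hce) as [n Hn].
  destruct (exists_coord1 (key (class_of e)) n N) as [w [HNw Hw]].
  exists (npair (gV (s e)) w). split.
  - pose proof (le_npair_r (gV (s e)) w). lia.
  - exists w. rewrite Hw. auto.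
Qed.

Lemma edge_maps_exist :
  exists phi : E -> nat -> nat, forall e, bij_on (phi e) (vertex_pts (r e)) (edge_pts e).
Proof.
  exists (fun e => epsilon (inhabits (fun n => n))
                     (fun phi => bij_on phi (vertex_pts (r e)) (edge_pts e))).
  intro e. cbv beta. apply epsilon_spec, unbounded_bij_on;
    [apply vertex_pts_unbounded | apply edge_pts_unbounded].
Qed.

Lemma edge_pts_meet v X Y e g : in_Cv s C v X -> in_Cv s C v Y -> X <> Y -> X e -> Y g ->
  exists m, edge_pts e m /\ edge_pts g m.
Proof.
  intros [HX HXv] [HY HYv] HXY He Hg.
  destruct (selector_onto _ _ _ (sel_spec X HX) e He) as [n1 Hn1].
  destruct (selector_onto _ _ _ (sel_spec Y HY) g Hg) as [n2 Hn2].
  assert (Hkey : key X <> key Y) by (intro H; apply HXY, key_inj; auto).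
  destruct (exists_coord2 _ _ n1 n2 Hkey) as [w [Hw1 Hw2]].
  exists (npair (gV v) w). split; exists w.
  - rewrite (class_of_eq X e HX He), (HXv e He), Hw1. auto.
  - rewrite (class_of_eq Y g HY Hg), (HYv g Hg), Hw2. auto.
Qed.

Lemma not_union_edge_pts v X w : in_Cv s C v X -> ~ S X -> coord (key X) w = 0%nat ->
  ~ exists e, X e /\ edge_pts e (npair (gV v) w).
Proof.
  intros HXv HSX Hw Hu. apply (union_edge_pts v X _ HXv) in Hu as [w' [Heq Hsel]].
  apply npair_inj in Heq as [_ <-]. apply Hsel.
  rewrite Hw. exact (selector_zero _ _ _ (sel_spec X (proj1 HXv)) HSX).
Qed.

Lemma union_edge_pts_proper v X : in_Cv s C v X -> ~ S X ->
  exists m, vertex_pts v m /\ ~ exists e, X e /\ edge_pts e m.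
Proof.
  intros HXv HSX. destruct (exists_coord1 (key X) 0 0) as [w [_ Hw]].
  exists (npair (gV v) w). split; [now exists w | exact (not_union_edge_pts v X w HXv HSX Hw)].
Qed.

Lemma union_edge_pts_distinct v X Y : in_Cv s C v X -> in_Cv s C v Y -> ~ S X -> X <> Y ->
  exists m, (exists g, Y g /\ edge_pts g m) /\ ~ exists e, X e /\ edge_pts e m.
Proof.
  intros HXv [HY HYv] HSX HXY.
  destruct (proj1 C_sep Y HY) as [g Hg].
  destruct (selector_onto _ _ _ (sel_spec Y HY) g Hg) as [n Hn].
  assert (Hkey : key X <> key Y) by (intro H; apply HXY, key_inj; auto; apply HXv).
  destruct (exists_coord2 _ _ 0 n Hkey) as [w [Hw1 Hw2]].
  exists (npair (gV v) w). split; [|exact (not_union_edge_pts v X w HXv HSX Hw1)].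
  exists g. split; [exact Hg|]. exists w.
  rewrite (class_of_eq Y g HY Hg), (HYv g Hg), Hw2. auto.
Qed.

End Construction.

Theorem theorem3p1 (V E : Type) (r s : E -> V) (C S : (E -> Prop) -> Prop)
  (hV : countable_type V) (hE : countable_type E)
  (hC : is_separation s C)
  (hS : forall X, S X -> C X /\ finite_set X) :
  exists (Xs : R -> Prop) (Rs : E -> R -> Prop) (D : V -> R -> Prop) (f : E -> R -> R),
    alg_branching_system r s C S Xs Rs D f /\
    forall v, non_sink s v ->
      (forall X Y, in_Cv s C v X -> in_Cv s C v Y -> X <> Y ->
         forall e g, X e -> Y g -> exists x, Rs e x /\ Rs g x) /\
      (forall X, in_Cv s C v X -> ~ S X ->
         (forall x, union_R Rs X x -> D v x) /\
         (exists x, D v x /\ ~ union_R Rs X x)) /\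
      (forall X Y, in_Cv s C v X -> in_Cv s C v Y -> ~ S X -> ~ S Y -> X <> Y ->
         ~ (forall x, union_R Rs X x <-> union_R Rs Y x)).
Proof.
  destruct hV as [gV gV_inj], hE as [gE gE_inj].
  set (Rn := edge_pts V E s C S gV gE). set (Dn := vertex_pts V gV).
  destruct (edge_maps_exist V E r s C S gV gE gE_inj hC) as [phi Hphi].
  exists (fun _ => True), (fun e => to_R (Rn e)), (fun v => to_R (Dn v)),
    (fun e x => INR (phi e (nat_of_R x))).
  split.
  - refine (conj (fun _ _ _ => I) (conj (fun _ _ _ => I) (conj _ (conj _ (conj _ (conj _ _)))))).
    + intros Y d e HY Hd He Hde. apply to_R_disjoint. intro m.
      exact (edge_pts_disjoint V E s C S gV gE hC Y d e m HY Hd He Hde).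
    + intros u w Huw. apply to_R_disjoint. intro m.
      exact (vertex_pts_disjoint V gV gV_inj u w m Huw).
    + intro e. apply to_R_sub, edge_pts_sub.
    + intros v Y _ HSY HY x. rewrite union_R_to_R. apply to_R_iff. intro m.
      exact (union_edge_pts_full V E s C S gV gE gE_inj hC v Y m HSY HY).
    + intro e. apply bij_on_to_R, Hphi.
  - intros v _. split; [|split].
    + intros X Y HX HY HXY e g He Hg.
      destruct (edge_pts_meet V E s C S gV gE gE_inj hC v X Y e g HX HY HXY He Hg) as [m Hm].
      exists (INR m). now rewrite !to_R_INR.
    + intros X HX HSX. split.
      * intro x. rewrite union_R_to_R. apply to_R_sub. intro m.
        exact (union_edge_pts_sub V E s C S gV gE v X m HX).
      * destruct (union_edge_pts_proper V E s C S gV gE gE_inj hC v X HX HSX) as [m [Hm Hu]].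
        exists (INR m). rewrite union_R_to_R, !to_R_INR. auto.
    + intros X Y HX HY HSX _ HXY Heq.
      destruct (union_edge_pts_distinct V E s C S gV gE gE_inj hC v X Y HX HY HSX HXY)
        as [m [HuY HuX]].
      pose proof (Heq (INR m)) as Hm. rewrite !union_R_to_R, !to_R_INR in Hm. tauto.
Qed.
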